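(* Let $w=e_{a_1}\cdots e_{a_N}$ with $a_1,\dots,a_N\in\{0,1\}$, $N\ge0$, and put $\overleftarrow{w}=e_{a_N}\cdots e_{a_1}$. Then in $\mathfrak H[[s,t]]$, \begin{align*} &\sum_{v=0}^{N}(-1)^v\,(1+e_0t)^{-1}e_1e_{a_1}\cdots e_{a_v}\ ш\ (1-e_0s)^{-1}e_1e_{a_N}\cdots e_{a_{v+1}}\\ &=(1+e_0t)^{-1}\ ш\ \bigl((1-e_0s)^{-1}e_1\overleftarrow{w}e_1(1-e_0t)^{-1}\bigr)+(-1)^N(1-e_0s)^{-1}\ ш\ \bigl((1+e_0t)^{-1}e_1we_1(1+e_0s)^{-1}\bigr). \end{align*}
   Context: $\mathfrak H=\mathbb Q\langle e_0,e_1\rangle$ (noncommutative polynomials); $s,t$ commuting indeterminates; $(1\pm e_0t)^{-1}=\sum_{m\ge0}(\mp t)^me_0^m$ etc. in $\mathfrak H[[s,t]]$. The shuffle product $ш$ on $\mathfrak H$ is the $\mathbb Q$-bilinear product with $1ш w=wш1=w$ and $we_iш w'e_j=(we_iш w')e_j+(wш w'e_j)e_i$ ($w,w'\in\mathfrak H$, $i,j\in\{0,1\}$), extended bilinearly and coefficientwise to $\mathfrak H[[s,t]]$. For $v=N$ the word $e_{a_N}\cdots e_{a_{v+1}}$ is empty, and for $v=0$ the word $e_{a_1}\cdots e_{a_v}$ is empty. *)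

From HB Require Import structures.
From mathcomp Require Import all_boot all_order all_algebra.
Set Implicit Arguments. Unset Strict Implicit. Unset Printing Implicit Defensive.
Import Order.TTheory GRing.Theory Num.Theory.
Local Open Scope ring_scope.

(* Words in the letters e_0 (false) and e_1 (true), read left to right. *)
Definition word := seq bool.

(* Shuffle of words on reversed words (head = last letter):
   rsh (i::x) (j::y) = map (cons j) (rsh (i::x) y) ++ map (cons i) (rsh x (j::y)). *)
Fixpoint rsh (x : word) (y : word) {struct x} : seq word :=
  match x with
  | [::] => [:: y]
  | i :: x' =>
      let fix aux (y : word) : seq word :=
        match y with
        | [::] => [:: x]
        | j :: y' => map (cons j) (aux y') ++ map (cons i) (rsh x' y)
        end in aux y
  end.

(* x ш y as a list of words with multiplicities:
   1 ш w = w ш 1 = w,  w e_i ш w' e_j = (w e_i ш w') e_j + (w ш w' e_j) e_i. *)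
Definition shuffle (x y : word) : seq word := map rev (rsh (rev x) (rev y)).

Fixpoint words (n : nat) : seq word :=
  match n with
  | 0 => [:: [::]]
  | n'.+1 => [seq b :: w | b <- [:: false; true], w <- words n']
  end.

(* Elements of H[[s,t]]: F u i j = coefficient of the word u times s^i t^j. *)
Definition ser := word -> nat -> nat -> rat.

Definition swd (w : word) : ser := fun u i j => ((u == w) && (i == 0%N) && (j == 0%N))%:R.

(* gs c = sum_m (c s)^m e_0^m ;  gt c = sum_m (c t)^m e_0^m .
   So (1 - e0 s)^{-1} = gs 1, (1 + e0 s)^{-1} = gs (-1), etc. *)
Definition gs (c : rat) : ser := fun u i j =>
  if (u == nseq i false) && (j == 0%N) then c ^+ i else 0.
Definition gt (c : rat) : ser := fun u i j =>
  if (u == nseq j false) && (i == 0%N) then c ^+ j else 0.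

Definition sconc (A B : ser) : ser := fun u i j =>
  \sum_(k < (size u).+1) \sum_(i1 < i.+1) \sum_(j1 < j.+1)
     A (take k u) i1 j1 * B (drop k u) (i - i1)%N (j - j1)%N.

Definition ssh (A B : ser) : ser := fun u i j =>
  \sum_(k < (size u).+1) \sum_(x <- words k) \sum_(y <- words (size u - k))
  \sum_(i1 < i.+1) \sum_(j1 < j.+1)
     A x i1 j1 * B y (i - i1)%N (j - j1)%N * (count_mem u (shuffle x y))%:R.

(* Let D_b strip a final letter e_b from every word of a series.  Since the
   last letter of a shuffle is the last letter of one of its two factors, D_b
   is a derivation of the shuffle product, and a series with zero constant
   term is determined by D_0 and D_1.  Both sides have zero constant term.
   On the left, D_b applied to the prefix factor of term v + 1 and to the
   suffix factor of term v gives the same shuffle with opposite signs, so the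
   alternating sum telescopes to its extreme terms v = 0 and v = N.  On the
   right, D_1 just strips the final e_1 of the second factors and returns these
   two terms, while D_0 multiplies the two factors of each shuffle by -t and t
   (resp. s and -s), so its two contributions cancel. *)

From HB Require Import structures.
From mathcomp Require Import all_boot all_order all_algebra.
From Stdlib Require Import FunctionalExtensionality.
Set Implicit Arguments.
Unset Strict Implicit.
Unset Printing Implicit Defensive.
Import Order.TTheory GRing.Theory Num.Theory.
Local Open Scope ring_scope.

Section CauchyProduct.

Variable R : comPzRingType.
Implicit Types (f g : nat -> nat -> R) (d : R).

Definition cauchy f g i j : R :=
  \sum_(i1 < i.+1) \sum_(j1 < j.+1) f i1 j1 * g (i - i1)%N (j - j1)%N.

(* The coefficient arrays of [d s f] and [d t f]. *)
Definition mulS d f a b : R := if a is a'.+1 then d * f a' b else 0.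
Definition mulT d f a b : R := if b is b'.+1 then d * f a b' else 0.

Lemma cauchyC f g i j : cauchy f g i j = cauchy g f i j.
Proof.
rewrite /cauchy (reindex_inj rev_ord_inj); apply: eq_bigr => i1 _.
rewrite (reindex_inj rev_ord_inj); apply: eq_bigr => j1 _ /=.
by rewrite !subSS !subKn -1?ltnS // mulrC.
Qed.

Lemma cauchy_flip f g i j :
  cauchy (fun a b => f b a) (fun a b => g b a) i j = cauchy f g j i.
Proof. by rewrite /cauchy exchange_big. Qed.

Lemma cauchy0l f g i j : (forall a b, f a b = 0) -> cauchy f g i j = 0.
Proof.
by move=> f0; rewrite /cauchy big1 // => i1 _; rewrite big1 // => j1 _; rewrite f0 mul0r.
Qed.

Lemma cauchy_mulSl d f g i j : cauchy (mulS d f) g i j = mulS d (cauchy f g) i j.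
Proof.
rewrite /cauchy /mulS; case: i => [|i].
  by rewrite big_ord1 big1 // => j1 _; rewrite mul0r.
rewrite big_ord_recl big1 ?add0r => [|j1 _]; last by rewrite mul0r.
rewrite mulr_sumr; apply: eq_bigr => i1 _; rewrite mulr_sumr.
by apply: eq_bigr => j1 _; rewrite lift0 subSS mulrA.
Qed.

Lemma mulT_oppl d f i j : mulT (- d) f i j = - mulT d f i j.
Proof. by case: j => [|j] /=; rewrite ?oppr0 ?mulNr. Qed.

End CauchyProduct.

Lemma alternating_telescope (R : pzRingType) N (F G : nat -> R) :
  (forall v, (v < N)%N -> F v.+1 = G v) ->
  \sum_(v < N.+1) (-1) ^+ v * (F v + G v) = F 0%N + (-1) ^+ N * G N.
Proof.
move=> FG; rewrite big_ord_recr /= -(big_mkord xpredT (fun v => (-1) ^+ v * (F v + G v))).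
rewrite (telescope_sumr_eq (fun v => - ((-1) ^+ v * F v))) // => [|v /andP[_ ltvN]].
  by rewrite expr0 mul1r opprK mulrDr addrA -!addrA addrCA addKr.
by rewrite -FG // exprS mulN1r mulNr !opprK mulrDr addrC.
Qed.

Lemma count_mem_map_rev (T : eqType) (s : seq T) (L : seq (seq T)) :
  count_mem s (map rev L) = count_mem (rev s) L.
Proof.
by rewrite count_map; apply: eq_count => z /=; apply/eqP/eqP => [<-|->]; rewrite revK.
Qed.

Lemma count_mem_map_cons (T : eqType) (b c : T) (r : seq T) (L : seq (seq T)) :
  count_mem (c :: r) (map (cons b) L) = ((b == c) * count_mem r L)%N.
Proof.
elim: L => [|z L IH] /=; first by rewrite muln0.
by rewrite IH eqseq_cons mulnDr; case: (b == c); rewrite ?mul1n ?mul0n.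
Qed.

Lemma eq_take (T : eqType) (u v : seq T) k : (k <= size u)%N ->
  (take k u == v) = (k == size v) && (take (size v) u == v).
Proof.
move=> ku; case: (eqVneq k (size v)) => [->//|kv].
by apply: contra_neqF kv => /eqP <-; rewrite size_takel.
Qed.

Lemma eq_cat (T : eqType) (u p q : seq T) :
  (u == p ++ q) = (take (size p) u == p) && (drop (size p) u == q).
Proof.
apply/eqP/andP => [->|[/eqP up /eqP uq]]; first by rewrite take_size_cat // drop_size_cat.
by rewrite -(cat_take_drop (size p) u) up uq.
Qed.

Lemma eq_nseq_catF (T : eqType) (x : T) (u q : seq T) i :
  (size u < i)%N -> (u == nseq i x ++ q) = false.
Proof.
by move=> ui; apply: contraTF ui => /eqP ->; rewrite size_cat size_nseq -leqNgt leq_addr.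
Qed.

Lemma rcons_nseq (T : Type) n (x : T) : rcons (nseq n x) x = nseq n.+1 x.
Proof. by elim: n => //= n ->. Qed.

Lemma rsh_nilr (x : word) : rsh x [::] = [:: x].
Proof. by case: x. Qed.

Lemma count_rsh_cons c r (x y : word) :
  count_mem (c :: r) (rsh x y) =
  ((if x is b :: x' then (b == c) * count_mem r (rsh x' y) else 0)
  + (if y is b :: y' then (b == c) * count_mem r (rsh x y') else 0))%N.
Proof.
case: x => [|b x]; case: y => [|b' y] //.
- by rewrite /= add0n !addn0 eqseq_cons; case: (b' == c); case: (y == r).
- by rewrite !rsh_nilr /= !addn0 eqseq_cons; case: (b == c); case: (x == r).
- by rewrite [rsh _ _]/= count_cat !count_mem_map_cons addnC.
Qed.

Lemma count_shuffle_rcons c w (x y : word) :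
  count_mem (rcons w c) (shuffle x y) =
  ((if rev x is b :: x' then (b == c) * count_mem w (shuffle (rev x') y) else 0)
  + (if rev y is b :: y' then (b == c) * count_mem w (shuffle x (rev y')) else 0))%N.
Proof.
rewrite /shuffle !count_mem_map_rev rev_rcons count_rsh_cons.
by case: (rev x) => [|b x']; case: (rev y) => [|b' y']; rewrite ?count_mem_map_rev ?revK.
Qed.

Lemma big_words_rcons (R : nmodType) n (F : word -> R) :
  \sum_(x <- words n.+1) F x = \sum_(x <- words n) \sum_(b <- [:: false; true]) F (rcons x b).
Proof.
have words_cons m (G : word -> R) : \sum_(x <- words m.+1) G x =
    \sum_(b <- [:: false; true]) \sum_(w <- words m) G (b :: w).
  by rewrite [words _]/= !big_cat big_nil !big_map !big_cons big_nil.
elim: n F => [|n IH] F; first by rewrite words_cons !big_cons !big_nil !addr0.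
by rewrite words_cons (words_cons n); apply: eq_bigr => b _; rewrite IH.
Qed.

Lemma sum_bool_eq (R : pzSemiRingType) (c : bool) (F : bool -> R) :
  \sum_(b <- [:: false; true]) (b == c)%:R * F b = F c.
Proof. by rewrite !big_cons big_nil; case: c; rewrite /= ?mul1r ?mul0r ?add0r ?addr0. Qed.

Lemma ser_ext (X Y : ser) : (forall u i j, X u i j = Y u i j) -> X = Y.
Proof. by move=> XY; do 3 apply: functional_extensionality => ?; apply: XY. Qed.

Definition ser0 : ser := fun _ _ _ => 0.

Definition sflip (X : ser) : ser := fun u i j => X u j i.

Definition smulS (d : rat) (X : ser) : ser := fun u => mulS d (X u).
Definition smulT (d : rat) (X : ser) : ser := fun u => mulT d (X u).

Definition rderiv (b : bool) (X : ser) : ser := fun u => X (rcons u b).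

Lemma ssh_E A B u i j : ssh A B u i j =
  \sum_(k < (size u).+1) \sum_(x <- words k) \sum_(y <- words (size u - k))
     (count_mem u (shuffle x y))%:R * cauchy (A x) (B y) i j.
Proof.
apply: eq_bigr => k _; apply: eq_bigr => x _; apply: eq_bigr => y _.
rewrite /cauchy mulr_sumr; apply: eq_bigr => i1 _; rewrite mulr_sumr.
by apply: eq_bigr => j1 _; rewrite mulrC.
Qed.

Lemma ssh_nil A B i j : ssh A B [::] i j = cauchy (A [::]) (B [::]) i j.
Proof. by rewrite ssh_E big_ord1 !big_seq1 mul1r. Qed.

Lemma ssh_rcons X Y w c i j :
  ssh X Y (rcons w c) i j = ssh (rderiv c X) Y w i j + ssh X (rderiv c Y) w i j.
Proof.
rewrite !ssh_E size_rcons.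
under eq_bigr => k _ do under eq_bigr => x _ do under eq_bigr => y _ do
  rewrite count_shuffle_rcons natrD mulrDl.
under eq_bigr => k _ do under eq_bigr => x _ do rewrite big_split.
under eq_bigr => k _ do rewrite big_split.
rewrite big_split; congr (_ + _).
- rewrite big_ord_recl big_seq1 big1 => [|y _]; last by rewrite mul0r.
  rewrite Monoid.mul1m; apply: eq_bigr => k _; rewrite lift0 subSS big_words_rcons.
  apply: eq_bigr => x _; rewrite exchange_big /=; apply: eq_bigr => y _.
  under eq_bigr => b _ do rewrite rev_rcons revK natrM -mulrA.
  by rewrite sum_bool_eq.
- rewrite big_ord_recr /= subnn [X in _ + X]big1 ?addr0 => [|x _]; last by rewrite big_seq1 mul0r.
  apply: eq_bigr => k _; rewrite /= subSn -1?ltnS //; apply: eq_bigr => x _.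
  rewrite big_words_rcons; apply: eq_bigr => y _.
  under eq_bigr => b _ do rewrite rev_rcons revK natrM -mulrA.
  by rewrite sum_bool_eq.
Qed.

Lemma sshC X Y u i j : ssh X Y u i j = ssh Y X u i j.
Proof.
elim/last_ind: u X Y i j => [|w c IH] X Y i j; first by rewrite !ssh_nil cauchyC.
by rewrite !ssh_rcons IH [ssh X (rderiv c Y) w i j]IH addrC.
Qed.

Lemma ssh0l X u i j : ssh ser0 X u i j = 0.
Proof.
rewrite ssh_E; apply: big1 => k _; apply: big1 => x _; apply: big1 => y _.
by rewrite cauchy0l ?mulr0.
Qed.

Lemma ssh0r X u i j : ssh X ser0 u i j = 0.
Proof. by rewrite sshC ssh0l. Qed.

Lemma ssh_nil0l X Y i j : (forall a b, X [::] a b = 0) -> ssh X Y [::] i j = 0.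
Proof. by move=> X0; rewrite ssh_nil cauchy0l. Qed.

Lemma ssh_nil0r X Y i j : (forall a b, Y [::] a b = 0) -> ssh X Y [::] i j = 0.
Proof. by move=> Y0; rewrite sshC ssh_nil0l. Qed.

Lemma ssh_sflip X Y u i j : ssh (sflip X) (sflip Y) u i j = ssh X Y u j i.
Proof. by rewrite !ssh_E; do 3 apply: eq_bigr => ? _; rewrite cauchy_flip. Qed.

Lemma ssh_smulSl d X Y u i j : ssh (smulS d X) Y u i j = mulS d (ssh X Y u) i j.
Proof.
case: i => [|i].
  by rewrite ssh_E; do 3 apply: big1 => ? _; rewrite [smulS _ _ _]/smulS cauchy_mulSl mulr0.
rewrite -[mulS _ _ _ _]/(d * ssh X Y u i j) !ssh_E mulr_sumr; apply: eq_bigr => k _.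
rewrite mulr_sumr; apply: eq_bigr => x _; rewrite mulr_sumr; apply: eq_bigr => y _.
by rewrite [smulS _ _ _]/smulS cauchy_mulSl mulrCA.
Qed.

Lemma ssh_smulTl d X Y u i j : ssh (smulT d X) Y u i j = mulT d (ssh X Y u) i j.
Proof.
rewrite -[smulT d X]/(sflip (smulS d (sflip X))) -[Y]/(sflip (sflip Y)) ssh_sflip.
by rewrite ssh_smulSl; case: j => //= j; rewrite ssh_sflip.
Qed.

Lemma ssh_smulTr d X Y u i j : ssh X (smulT d Y) u i j = mulT d (ssh X Y u) i j.
Proof. by rewrite sshC ssh_smulTl; case: j => //= j; rewrite sshC. Qed.

Lemma rderiv_sflip b X : rderiv b (sflip X) = sflip (rderiv b X).
Proof. by []. Qed.

Lemma sflip0 : sflip ser0 = ser0.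
Proof. by []. Qed.

Lemma sconc_sflip A B : sconc (sflip A) (sflip B) = sflip (sconc A B).
Proof. by apply: ser_ext => u i j; apply: eq_bigr => k _; rewrite exchange_big. Qed.

Lemma sflip_swd w : sflip (swd w) = swd w.
Proof. by apply: ser_ext => u i j; rewrite /sflip /swd andbAC. Qed.

Lemma sconc_gsE c B u i j : sconc (gs c) B u i j =
  \sum_(k < (size u).+1 | (k <= i)%N)
     (take k u == nseq k false)%:R * c ^+ k * B (drop k u) (i - k)%N j.
Proof.
rewrite /sconc [RHS]big_mkcond; apply: eq_bigr => k _.
have ku : (k <= size u)%N by rewrite -ltnS.
rewrite exchange_big (big_only1 ord0) //= => [|j1 j10 _]; last first.
  by apply: big1 => i1 _; rewrite /gs (negbTE (j10 : (j1 : nat) != 0%N)) andbF mul0r.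
rewrite subn0; under eq_bigr => i1 _ do rewrite /gs andbT (eq_take _ ku) size_nseq.
case: leqP => [ki|ik].
- rewrite (big_only1 (Ordinal (ki : (k < i.+1)%N))) //= => [|i1 i1k _].
    by rewrite eqxx; case: (_ == _); rewrite ?mul1r ?mul0r.
  by rewrite eq_sym (negbTE (i1k : (i1 : nat) != k)) mul0r.
- by apply: big1 => i1 _; rewrite gtn_eqF ?mul0r // (leq_ltn_trans _ ik) // -ltnS.
Qed.

Definition s_free (B : ser) := forall u a j, a != 0%N -> B u a j = 0.

Lemma sconc_gs_sfree c B u i j : s_free B ->
  sconc (gs c) B u i j =
  if (i <= size u)%N then (take i u == nseq i false)%:R * c ^+ i * B (drop i u) 0%N j
  else 0.
Proof.
move=> B0; rewrite sconc_gsE; case: leqP => [iu|ui].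
  rewrite (big_only1 (Ordinal (iu : (i < (size u).+1)%N))) /= ?subnn // => k ki ik.
  rewrite B0 ?mulr0 // subn_eq0 -ltnNge ltn_neqAle ik andbT.
  exact: (ki : (k : nat) != i).
by apply: big1 => k ki; rewrite B0 ?mulr0 // subn_eq0 -ltnNge (leq_ltn_trans _ ui) // -ltnS.
Qed.

Lemma sconc_swdE w B u i j :
  sconc (swd w) B u i j = (take (size w) u == w)%:R * B (drop (size w) u) i j.
Proof.
have termE (k : 'I_(size u).+1) :
    \sum_(i1 < i.+1) \sum_(j1 < j.+1) swd w (take k u) i1 j1 * B (drop k u) (i - i1)%N (j - j1)%N
    = (take k u == w)%:R * B (drop k u) i j.
  rewrite (big_only1 ord0) // => [|i1 i10 _]; last first.
    by apply: big1 => j1 _; rewrite /swd (negbTE (i10 : (i1 : nat) != 0%N)) andbF mul0r.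
  rewrite (big_only1 ord0) // => [|j1 j10 _]; last first.
    by rewrite /swd (negbTE (j10 : (j1 : nat) != 0%N)) andbF mul0r.
  by rewrite /swd /= !andbT !subn0.
rewrite /sconc (eq_bigr _ (fun k _ => termE k)).
case: (leqP (size w) (size u)) => [wu|uw].
  rewrite (big_only1 (Ordinal (wu : (size w < (size u).+1)%N))) // => k kw _.
  by rewrite eq_take -1?ltnS // (negbTE (kw : (k : nat) != size w)) mul0r.
rewrite take_oversize ?(ltnW uw) // (_ : (u == w) = false) ?mul0r.
  apply: big1 => k _; rewrite eq_take -1?ltnS // ltn_eqF ?mul0r //.
  by rewrite (leq_ltn_trans _ uw) // -ltnS.
by apply: contraTF uw => /eqP ->; rewrite ltnn.
Qed.

(* [gsw c w] is [(1 - c e_0 s)^-1 w] and [gswgt c d w] is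
   [(1 - c e_0 s)^-1 w (1 - d e_0 t)^-1]. *)
Definition gsw (c : rat) (w : word) : ser := fun u i j =>
  if (u == nseq i false ++ w) && (j == 0%N) then c ^+ i else 0.
Definition gswgt (c d : rat) (w : word) : ser := fun u i j =>
  if u == nseq i false ++ w ++ nseq j false then c ^+ i * d ^+ j else 0.

Lemma sconc_gs_swd c w : sconc (gs c) (swd w) = gsw c w.
Proof.
apply: ser_ext => u i j; rewrite sconc_gs_sfree => [|v a b a0]; last first.
  by rewrite /swd (negbTE a0) andbF.
rewrite /gsw; case: leqP => [iu|ui]; last by rewrite eq_nseq_catF.
rewrite /swd eq_cat size_nseq.
by case: (take i u == _); case: (drop i u == w); case: (j == 0%N);
  rewrite /= ?mul0r ?mul1r ?mulr1 ?mulr0.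
Qed.

Lemma sconc_gs_swd_gt c d w : sconc (gs c) (sconc (swd w) (gt d)) = gswgt c d w.
Proof.
apply: ser_ext => u i j; rewrite sconc_gs_sfree => [|v a b a0]; last first.
  by rewrite sconc_swdE /gt (negbTE a0) andbF mulr0.
rewrite /gswgt; case: leqP => [iu|ui]; last by rewrite eq_nseq_catF.
rewrite sconc_swdE /gt !eq_cat size_nseq.
by case: (take i u == _); case: (take _ (drop i u) == w); case: (drop _ _ == _);
  rewrite /= ?mul0r ?mulr0 ?mul1r.
Qed.

Lemma sconc_gt_swd c w : sconc (gt c) (swd w) = sflip (gsw c w).
Proof. by rewrite -[gt c]/(sflip (gs c)) -sflip_swd sconc_sflip sconc_gs_swd. Qed.

Lemma sconc_gt_swd_gs c d w : sconc (gt c) (sconc (swd w) (gs d)) = sflip (gswgt c d w).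
Proof.
rewrite -[gt c]/(sflip (gs c)) -[gs d]/(sflip (gt d)) -sflip_swd.
by rewrite (sconc_sflip (swd w)) (sconc_sflip (gs c)) sconc_gs_swd_gt.
Qed.

Lemma gsw_nil c : gsw c [::] = gs c.
Proof. by apply: ser_ext => u i j; rewrite /gsw cats0. Qed.

Lemma rderiv_gsw b c w x : rderiv b (gsw c (rcons w x)) = if b == x then gsw c w else ser0.
Proof.
apply: ser_ext => u i j; rewrite /rderiv /gsw -rcons_cat eqseq_rcons.
by case: (b == x); rewrite ?andbT ?andbF.
Qed.

Lemma rderiv_gs b c : rderiv b (gs c) = if b then ser0 else smulS c (gs c).
Proof.
apply: ser_ext => u i j; rewrite /rderiv /gs; case: i => [|i].
  by case: b; case: u.
rewrite -rcons_nseq eqseq_rcons; case: b; rewrite ?andbF // /smulS /mulS /gs andbT.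
by case: (_ && _); rewrite ?exprS ?mulr0.
Qed.

Lemma rderiv_gt b c : rderiv b (gt c) = if b then ser0 else smulT c (gt c).
Proof. by case: b; exact: (congr1 sflip (rderiv_gs _ c)). Qed.

Lemma rderiv_gswgt b c d w : rderiv b (gswgt c d (rcons w true)) =
  if b then gsw c w else smulT d (gswgt c d (rcons w true)).
Proof.
apply: ser_ext => u i j; rewrite /rderiv /gswgt; case: j => [|j].
  rewrite cats0 -rcons_cat eqseq_rcons; case: b; last by rewrite andbF.
  by rewrite /gsw !andbT expr0 mulr1.
rewrite -rcons_nseq -(rcons_cat _ (rcons w true)) -(rcons_cat _ (nseq i false)) eqseq_rcons.
case: b; first by rewrite andbF /gsw andbF.
by rewrite andbT /smulT /mulT /gswgt; case: (_ == _); rewrite ?mulr0 // exprS mulrCA.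
Qed.

Lemma ssh_gt_gswgt_rcons e c d w u b i j : e = - d ->
  ssh (gt e) (gswgt c d (rcons w true)) (rcons u b) i j =
  if b then ssh (gt e) (gsw c w) u i j else 0.
Proof.
move=> ->; rewrite ssh_rcons rderiv_gt rderiv_gswgt.
case: b; first by rewrite ssh0l add0r.
by rewrite ssh_smulTl ssh_smulTr mulT_oppl addNr.
Qed.

Lemma ssh_gs_sflip_gswgt_rcons e c d w u b i j : e = - d ->
  ssh (gs e) (sflip (gswgt c d (rcons w true))) (rcons u b) i j =
  if b then ssh (gs e) (sflip (gsw c w)) u i j else 0.
Proof.
move=> ed; rewrite -[gs e]/(sflip (gt e)) [LHS]ssh_sflip [in RHS]ssh_sflip.
exact: ssh_gt_gswgt_rcons.
Qed.

Lemma alternating_ssh_rcons e f (a : seq bool) u b i j :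
  \sum_(v < (size a).+1) (-1) ^+ v *
     ssh (sflip (gsw e (true :: take v a))) (gsw f (true :: rev (drop v a))) (rcons u b) i j
  = if b then ssh (gt e) (gsw f (true :: rev a)) u i j
              + (-1) ^+ size a * ssh (sflip (gsw e (true :: a))) (gs f) u i j
    else 0.
Proof.
pose P v := sflip (gsw e (true :: take v a)); pose Q v := gsw f (true :: rev (drop v a)).
under eq_bigr => v _ do rewrite ssh_rcons -/(P v) -/(Q v).
rewrite (alternating_telescope (F := fun v => ssh (rderiv b (P v)) (Q v) u i j)
                               (G := fun v => ssh (P v) (rderiv b (Q v)) u i j)).
  rewrite /P /Q take0 drop0 take_size drop_size -[[:: true]]/(rcons [::] true).
  rewrite rderiv_sflip !rderiv_gsw !gsw_nil.
  by case: b; rewrite ?sflip0 ?ssh0l ?ssh0r ?mulr0 ?addr0.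
move=> v lt_v_a; rewrite /P /Q.
rewrite (take_nth false lt_v_a) (drop_nth false lt_v_a) rev_cons.
rewrite -(rcons_cons true (take v a)) -(rcons_cons true (rev _)) rderiv_sflip !rderiv_gsw.
by case: (b == _); rewrite ?sflip0 ?ssh0l ?ssh0r.
Qed.

Theorem mainTheorem18 (a : seq bool) :
  forall (u : word) (i j : nat),
    \sum_(v < (size a).+1)
       (-1) ^+ v * ssh (sconc (gt (-1)) (swd (true :: take v a)))
                       (sconc (gs 1) (swd (true :: rev (drop v a)))) u i j
  = ssh (gt (-1)) (sconc (gs 1) (sconc (swd (true :: rev a ++ [:: true])) (gt 1))) u i j
    + (-1) ^+ (size a)
      * ssh (gs 1) (sconc (gt (-1)) (sconc (swd (true :: a ++ [:: true])) (gs (-1)))) u i j.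
Proof.
move=> u i j.
under eq_bigr => v _ do rewrite sconc_gt_swd sconc_gs_swd.
rewrite sconc_gs_swd_gt sconc_gt_swd_gs !cats1.
rewrite -(rcons_cons true (rev a)) -(rcons_cons true a).
case/lastP: u => [|u b].
  have nil0 p (w : word) : ([::] == nseq p false ++ true :: w) = false by case: p.
  rewrite big1 => [|v _]; last by rewrite ssh_nil0l ?mulr0 // => p q; rewrite /sflip /gsw nil0.
  by rewrite !ssh_nil0r ?mulr0 ?addr0 // => p q; rewrite /sflip /gswgt nil0.
rewrite alternating_ssh_rcons ssh_gt_gswgt_rcons // ssh_gs_sflip_gswgt_rcons ?opprK //.
by case: b; rewrite ?mulr0 ?addr0 // [ssh (gs 1) _ _ _ _]sshC.
Qed.
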